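(* Let $(D_d)_{d\in\mathbb{N}}$ satisfy Property (P), let $(L_d)$ be positive numbers with $\lim_{d\to\infty}L_d\sqrt d=0$, and let $C_d^0(L)=\{f\colon D_d\to\mathbb{R}\mid \|f\|_\infty\le1,\ \operatorname{Lip}(f)\le L_d\}$. Then for every $\varepsilon\in(0,1)$ there is $d(\varepsilon)$ such that $n(\varepsilon,C_d^0(L))=1$ for all $d\ge d(\varepsilon)$.
   Context: Property (P): $(D_d)$ is a sequence of open sets $D_d\subset\mathbb R^d$ with $\lambda_d(D_d)=1$ for which there exist $x_d^*\in D_d$ and $R<\infty$ with $\lim_{d\to\infty}\lambda_d(\{x\in D_d\mid\|x-x_d^*\|_2\ge R\sqrt d\})=0$. $\operatorname{Lip}(f)=\sup_{x\ne y}|f(x)-f(y)|/\|x-y\|_2$. Information complexity $n(\varepsilon,F_d)$: the minimal number $n\ge0$ of function values such that some algorithm $A_{n,d}(f)=\phi_{n,d}(f(x_1),\dots,f(x_n))$ (points $x_j\in D_d$ possibly adaptive, $\phi_{n,d}$ arbitrary; constants if $n=0$) satisfies $\sup_{f\in F_d}|\int_{D_d}f(x)\,dx-A_{n,d}(f)|\le\varepsilon$. *)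

From HB Require Import structures.
From mathcomp Require Import all_boot all_order all_algebra.
From mathcomp Require Import all_classical all_reals all_analysis.
Set Implicit Arguments.
Unset Strict Implicit.
Unset Printing Implicit Defensive.
Import Order.TTheory GRing.Theory Num.Theory.
Import numFieldNormedType.Exports.
Local Open Scope classical_set_scope.
Local Open Scope ring_scope.

(* R^d is represented by d.-tuple R, which MathComp-Analysis equips with the
   product (Borel) sigma-algebra generated by the coordinate projections. *)

Section Defs.
Variable R : realType.

Definition dist2 (d : nat) (x y : d.-tuple R) : R :=
  Num.sqrt (\sum_(i < d) (tnth x i - tnth y i) ^+ 2).

Definition open_Rd (d : nat) (D : set (d.-tuple R)) : Prop :=
  forall x, D x -> exists2 r : R, 0 < r & forall y, dist2 y x < r -> D y.

(* lam is Lebesgue measure on R^d: it is a measure on the Borel sets of R^d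
   giving every half-open box its volume (this determines it uniquely). *)
Definition is_lebesgue_measure (d : nat)
    (lam : {measure set (d.-tuple R) -> \bar R}) : Prop :=
  forall a b : d.-tuple R, (forall i, tnth a i <= tnth b i) ->
    lam [set x | forall i, tnth a i <= tnth x i < tnth b i]
      = (\prod_(i < d) (tnth b i - tnth a i))%:E.

Definition propertyP (lam : forall d : nat, {measure set (d.-tuple R) -> \bar R})
    (D : forall d : nat, set (d.-tuple R)) : Prop :=
  (forall d, open_Rd (D d)) /\
  (forall d, lam d (D d) = 1%E) /\
  exists (xs : forall d : nat, d.-tuple R) (R0 : R),
    (forall d, D d (xs d)) /\
    (fun d : nat => lam d [set x | D d x /\ R0 * Num.sqrt d%:R <= dist2 x (xs d)])
      @ \oo --> 0%E.

(* The class C_d^0(L) = {f : D -> R | ||f||_oo <= 1, Lip(f) <= L}; functions on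
   D are represented by functions on R^d whose values outside D are irrelevant. *)
Definition lip_class (d : nat) (D : set (d.-tuple R)) (L : R)
    : set (d.-tuple R -> R) :=
  [set f | (forall x, D x -> `|f x| <= 1) /\
           (forall x y, D x -> D y -> `|f x - f y| <= L * dist2 x y)].

(* A (possibly adaptive) deterministic algorithm using n function values:
   the k-th node is alg_pt k ys, where ys are the previously observed values,
   and the output is alg_phi applied to the n observed values. *)
Record algorithm (X : Type) := Algorithm {
  alg_pt : nat -> seq R -> X ;
  alg_phi : seq R -> R }.

Fixpoint alg_values (X : Type) (A : algorithm X) (f : X -> R) (k : nat) : seq R :=
  match k with
  | 0 => [::]
  | k.+1 => let ys := alg_values A f k in rcons ys (f (alg_pt A k ys))
  end.

Definition alg_output (X : Type) (A : algorithm X) (n : nat) (f : X -> R) : R :=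
  alg_phi A (alg_values A f n).

Definition nodes_in (X : Type) (A : algorithm X) (n : nat) (D : set X) : Prop :=
  forall k ys, (k < n)%N -> D (alg_pt A k ys).

Definition eps_achievable (d : nat) (lam : {measure set (d.-tuple R) -> \bar R})
    (D : set (d.-tuple R)) (F : set (d.-tuple R -> R)) (eps : R) (n : nat) : Prop :=
  exists A : algorithm (d.-tuple R), nodes_in A n D /\
    forall f, F f ->
      (`| (\int[lam]_(x in D) (f x)%:E) - (alg_output A n f)%:E | <= eps%:E)%E.

Definition info_complexity_eq (d : nat) (lam : {measure set (d.-tuple R) -> \bar R})
    (D : set (d.-tuple R)) (F : set (d.-tuple R -> R)) (eps : R) (n : nat) : Prop :=
  eps_achievable lam D F eps n /\
  forall m, eps_achievable lam D F eps m -> (n <= m)%N.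

End Defs.

(* The one-point algorithm that returns f(x_d^* ) has error at most
   L_d |R| sqrt d + 2 lambda_d({x in D_d | ||x - x_d^* ||_2 >= R sqrt d}): near x_d^*
   the Lipschitz bound controls |f x - f x_d^*|, far from it the sup-norm bound
   does.  Both terms tend to 0, so one function value suffices for large d.
   Zero values never suffice: a constant output c is at distance at least 1
   from one of the integrals of the constant functions 1 and -1. *)

From HB Require Import structures.
From mathcomp Require Import all_boot all_order all_algebra.
From mathcomp Require Import all_classical all_reals all_analysis.
From mathcomp Require Import measurable_realfun lra.
Set Implicit Arguments.
Unset Strict Implicit.
Unset Printing Implicit Defensive.

Import Order.TTheory GRing.Theory Num.Theory.
Import numFieldNormedType.Exports.
Local Open Scope classical_set_scope.
Local Open Scope ring_scope.

Section Measurability.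
Variables (R : realType) (d : nat).

Lemma dist2_le_coord (x y : d.-tuple R) (e : R) : 0 <= e ->
  (forall i, `|tnth y i - tnth x i| <= e) -> dist2 y x <= Num.sqrt d%:R * e.
Proof.
move=> e0 hxy; rewrite /dist2 -[e in _ * e](ger0_norm e0) -sqrtr_sqr -sqrtrM //.
rewrite ler_sqrt ?mulr_ge0 ?sqr_ge0 //.
apply: (le_trans (y := \sum_(i < d) e ^+ 2)); last first.
  by rewrite sumr_const card_ord mulr_natl.
apply: ler_sum => i _; move: (hxy i); rewrite ler_norml => /andP[h1 h2]; nra.
Qed.

Definition rat_cube (q : d.-tuple rat) (k : nat) : set (d.-tuple R) :=
  \bigcap_(i in [set: 'I_d]) ((fun y : d.-tuple R => tnth y i) @^-1`
      ball (ratr (tnth q i) : R) (k.+1%:R^-1)).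

Lemma measurable_rat_cube q k : measurable (rat_cube q k).
Proof.
apply: fin_bigcap_measurable; first exact: finite_finset.
move=> i _; rewrite -[X in measurable X]setTI.
by apply: (measurable_tnth (T:=R) i) => //; exact: measurable_ball.
Qed.

Lemma open_Rd_rat_cube {D : set (d.-tuple R)} {x} : open_Rd D -> D x ->
  exists q k, rat_cube q k x /\ rat_cube q k `<=` D.
Proof.
move=> oD Dx; have [r r0 hr] := oD x Dx.
pose c := r / (2 * (Num.sqrt d%:R + 1)).
have c0 : 0 < c by rewrite divr_gt0 // mulr_gt0 // ltr_wpDl ?sqrtr_ge0.
pose k := Num.truncn c^-1; pose e : R := k.+1%:R^-1.
have e0 : 0 < e by rewrite invr_gt0.
have ec : e < c by rewrite -[c]invrK ltf_pV2 ?posrE ?invr_gt0 // truncnS_gt.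
have /boolp.choice[g hg] : forall i : 'I_d,
    exists q : rat, ratr q \in `](tnth x i - e), (tnth x i + e)[.
  by move=> i; apply: rat_in_itvoo; lra.
exists [tuple g i | i < d], k; split.
  move=> i _ /=; rewrite tnth_mktuple /ball /= -/e ltr_norml.
  by move: (hg i); rewrite in_itv /= => /andP[h1 h2]; apply/andP; split; lra.
move=> y yc; apply: hr; apply: (le_lt_trans (dist2_le_coord (e := 2 * e) _ _)).
- by rewrite mulr_ge0 // ltW.
- move=> i; move: (yc i I) (hg i); rewrite /ball /= tnth_mktuple -/e in_itv /=.
  by rewrite ltr_norml ler_norml => /andP[a1 a2] /andP[b1 b2]; apply/andP; split; lra.
- have s0 := sqrtr_ge0 (d%:R : R).
  have : e * (2 * (Num.sqrt d%:R + 1)) < r by rewrite -ltr_pdivlMr // mulr_gt0 //; lra.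
  nra.
Qed.

(* An open set is a countable union of rational cubes. *)
Lemma open_Rd_measurable (D : set (d.-tuple R)) : open_Rd D -> measurable D.
Proof.
move=> oD; pose F (p : d.-tuple rat * nat) :=
  if pselect (rat_cube p.1 p.2 `<=` D) then rat_cube p.1 p.2 else set0.
have -> : D = \bigcup_p F p.
  apply/seteqP; split => [x Dx|y [p _]]; last first.
    by rewrite /F; case: pselect => [h /h|].
  have [q [k [xc cD]]] := open_Rd_rat_cube oD Dx.
  by exists (q, k) => //; rewrite /F; case: pselect.
apply: countable_bigcupT_measurable; first exact: countableP.
move=> p; rewrite /F; case: pselect => ?; [exact: measurable_rat_cube|exact: measurable0].
Qed.

Lemma measurable_dist2 (z : d.-tuple R) :
  measurable_fun setT (fun x : d.-tuple R => dist2 x z).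
Proof.
apply: (@measurableT_comp _ _ _ _ _ _ (@Num.sqrt R)).
  by apply: continuous_measurable_fun; exact: sqrt_continuous.
apply: measurable_sum => i; apply: measurable_funX.
by apply: measurable_funB => //; exact: measurable_tnth.
Qed.

Lemma measurable_dist2_ge (z : d.-tuple R) (c : R) :
  measurable [set x : d.-tuple R | c <= dist2 x z].
Proof.
have := @measurable_dist2 z measurableT _ (measurable_itv `[c, +oo[).
by rewrite setTI; congr measurable; apply/seteqP; split => x /=; rewrite in_itv /= andbT.
Qed.

Lemma lipschitz_measurable (D : set (d.-tuple R)) (L : R) (f : d.-tuple R -> R) :
  open_Rd D -> 0 < L ->
  (forall x y, D x -> D y -> `|f x - f y| <= L * dist2 x y) ->
  measurable_fun D f.
Proof.
move=> oD L0 hf; apply: (measurability _ (RGenOInfty.measurableE R)).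
move=> _ [_ [a ->] <-]; apply: open_Rd_measurable.
move=> y [Dy]; rewrite /= in_itv /= andbT => ay.
have [r r0 hr] := oD y Dy.
exists (Num.min r ((f y - a) / L)); first by rewrite lt_min r0 divr_gt0 // subr_gt0.
move=> z; rewrite lt_min => /andP[zr za]; have Dz := hr z zr.
split => //; rewrite /= in_itv /= andbT.
move: (hf z y Dz Dy) za; rewrite ltr_pdivlMr // ler_norml => /andP[h1 h2]; nra.
Qed.

End Measurability.

Section OnePointRule.
Variables (R : realType) (d : nat).
Variables (lam : {measure set (d.-tuple R) -> \bar R}) (D : set (d.-tuple R)).
Hypotheses (oD : open_Rd D) (lamD : lam D = 1%E).

Let mD : measurable D := open_Rd_measurable oD.

Lemma integral_cst_mass1 (a : R) : (\int[lam]_(x in D) a%:E = a%:E)%E.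
Proof. by rewrite integral_cst // lamD mule1. Qed.

Lemma lip_class_cst (L a : R) : 0 <= L -> `|a| <= 1 -> lip_class D L (fun=> a).
Proof.
move=> L0 a1; split => // x y _ _.
by rewrite subrr normr0 mulr_ge0 ?sqrtr_ge0.
Qed.

Lemma lip_class_integrable (L : R) f : 0 < L -> lip_class D L f ->
  lam.-integrable D (EFin \o f).
Proof.
move=> L0 [hb hl]; apply: measurable_bounded_integrable => //.
- by rewrite lamD ltry.
- exact: lipschitz_measurable hl.
- rewrite /bounded_near; near=> M => y Dy /=.
  by apply: le_trans (hb y Dy) _; near: M; exact: nbhs_pinfty_ge.
Unshelve. all: by end_near.
Qed.

Lemma lip_class_dev_le (L c : R) f x0 : 0 < L -> lip_class D L f -> D x0 ->
  forall x, D x -> `|f x - f x0| <=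
    L * `|c| + 2 * \1_[set y | c <= dist2 y x0] x.
Proof.
move=> L0 [hb hl] Dx0 x Dx; rewrite /indic.
have [far|nfar] := boolP (x \in _).
  rewrite mulr1; apply: le_trans (ler_normB _ _) _.
  by have := hb x Dx; have := hb x0 Dx0; have := mulr_ge0 (ltW L0) (normr_ge0 c); lra.
rewrite mulr0 addr0; apply: le_trans (hl x x0 Dx Dx0) _.
rewrite ler_pM2l // (le_trans _ (ler_norm c)) // ltW // ltNge.
by apply/negP => h; move/negP: nfar; apply; rewrite inE.
Qed.

Lemma one_point_error (L c : R) f x0 : 0 < L -> lip_class D L f -> D x0 ->
  (`| \int[lam]_(x in D) (f x)%:E - (f x0)%:E | <=
     (L * `|c|)%:E + 2%:E * lam (D `&` [set x | (c <= dist2 x x0)%R]))%E.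
Proof.
move=> L0 hf Dx0; set far := [set x | _].
have mfar : measurable far := measurable_dist2_ge x0 c.
rewrite -[X in (_ - X)%E]integral_cst_mass1 -integralB_EFin //; last first.
- case: hf => hb _; apply: (lip_class_integrable L0).
  exact: lip_class_cst (ltW L0) (hb x0 Dx0).
- exact: lip_class_integrable hf.
have mdev : measurable_fun D (fun x => (f x)%:E - (f x0)%:E)%E.
  apply/measurable_EFinP/measurable_funB => //.
  by case: hf => _ hl; exact: lipschitz_measurable hl.
apply: le_trans (le_abse_integral _ mD mdev) _.
have mind : measurable_fun D (EFin \o (\1_far : d.-tuple R -> R)).
  by apply/measurable_EFinP; exact: measurable_indic.
have Lc0 : 0 <= L * `|c| by rewrite mulr_ge0 // ltW.
apply: (le_trans (y := \int[lam]_(x in D)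
                         ((L * `|c|)%:E + 2%:E * (\1_far x)%:E))%E).
  apply: ge0_le_integral => //.
  - by apply: measurableT_comp.
  - by apply: emeasurable_funD => //; exact: (emeasurable_funM (f := cst 2%:E)).
  - by move=> x Dx /=; rewrite -EFinM -EFinD lee_fin; exact: lip_class_dev_le.
rewrite ge0_integralD //; last exact: (emeasurable_funM (f := cst 2%:E)).
rewrite integral_cst_mass1 ge0_integralZl //.
by rewrite integral_indic // setIC.
Qed.

Lemma eps_achievable_one_point (L c eps : R) x0 : 0 < L -> D x0 ->
  ((L * `|c|)%:E + 2%:E * lam (D `&` [set x | (c <= dist2 x x0)%R]) <= eps%:E)%E ->
  eps_achievable lam D (lip_class D L) eps 1.
Proof.
move=> L0 Dx0 herr; exists (Algorithm (fun _ _ => x0) (head 0)).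
split=> [//|f hf]; exact: le_trans (one_point_error c L0 hf Dx0) herr.
Qed.

Lemma not_eps_achievable0 (L eps : R) : 0 <= L -> eps < 1 ->
  ~ eps_achievable lam D (lip_class D L) eps 0.
Proof.
move=> L0 eps1 [A [_ hA]].
have := hA _ (lip_class_cst (a := 1) L0 _); rewrite normr1 => /(_ (lexx _)).
have := hA _ (lip_class_cst (a := -1) L0 _); rewrite normrN normr1 => /(_ (lexx _)).
rewrite /alg_output /= !integral_cst_mass1 -!EFinB !abse_EFin !lee_fin !ler_norml.
lra.
Qed.

Lemma info_complexity_eq1 (L eps : R) : 0 < L -> eps < 1 ->
  eps_achievable lam D (lip_class D L) eps 1 ->
  info_complexity_eq lam D (lip_class D L) eps 1.
Proof.
move=> L0 eps1 h1; split=> // -[|m] // h0.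
by case: (not_eps_achievable0 (ltW L0) eps1 h0).
Qed.

End OnePointRule.

Theorem proposition3p3 (R : realType)
    (lam : forall d : nat, {measure set (d.-tuple R) -> \bar R})
    (hlam : forall d : nat, is_lebesgue_measure (lam d))
    (D : forall d : nat, set (d.-tuple R))
    (hD : propertyP lam D)
    (L : nat -> R) (hLpos : forall d, 0 < L d)
    (hL : (fun d : nat => L d * Num.sqrt d%:R) @ \oo --> 0) :
  forall eps : R, 0 < eps < 1 ->
    exists d0 : nat, forall d : nat, (d0 <= d)%N ->
      info_complexity_eq (lam d) (D d) (lip_class (D d) (L d)) eps 1.
Proof.
move=> eps /andP[eps0 eps1]; have [oD [lamD [xs [R0 [Dxs far0]]]]] := hD.
have near_small : \forall d \near \oo, L d * `|R0 * Num.sqrt d%:R| <= eps / 2.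
  near=> d; have : `|L d * Num.sqrt d%:R| <= eps / 2 / (`|R0| + 1).
    by near: d; apply: (cvgr0_norm_le _ hL); rewrite !divr_gt0 // ltr_pwDr.
  rewrite ger0_norm ?mulr_ge0 ?sqrtr_ge0 ?(ltW (hLpos d)) //.
  rewrite ler_pdivlMr ?ltr_pwDr // normrM (ger0_norm (sqrtr_ge0 _)) mulrCA.
  by have := normr_ge0 R0; nra.
have far_small : \forall d \near \oo,
    (lam d [set x | D d x /\ (R0 * Num.sqrt d%:R <= dist2 x (xs d))%R]
       < (eps / 4)%:E)%E.
  apply: (far0 [set y | (y < (eps / 4)%:E)%E]); apply: open_nbhs_nbhs.
  by split; [exact: open_ereal_lt_ereal | rewrite /= lte_fin divr_gt0].
suff [d0 _ hd0] : \forall d \near \oo,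
    info_complexity_eq (lam d) (D d) (lip_class (D d) (L d)) eps 1 by exists d0.
near=> d; apply: (info_complexity_eq1 (oD d) (lamD d) (hLpos d) eps1).
apply: (eps_achievable_one_point (oD d) (lamD d) (c := R0 * Num.sqrt d%:R)
          (hLpos d) (Dxs d)).
apply: (le_trans (y := (eps / 2)%:E + (eps / 2)%:E)%E); last by rewrite -EFinD -splitr.
apply: leeD; first by rewrite lee_fin; near: d; exact: near_small.
apply: (le_trans (y := 2%:E * (eps / 4)%:E)%E).
  by apply: lee_wpmul2l; [rewrite lee_fin | apply: ltW; near: d; exact: far_small].
by rewrite -EFinM lee_fin; clear -eps0; lra.
Unshelve. all: by end_near.
Qed.
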